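(* Assume (A1) and (A2). There is an absolute constant $c$ such that if $n\ge c\,\bar\kappa^2r^2\log k/\tau^2$, then with high probability $$\|Q^{-1/2}(\nabla f(x^* )-n\mathbf 1)\|_2\le\widetilde O(\sqrt{nr})\quad\text{and}\quad\|Q^{-1/2}(\nabla f(x^* )-n\mathbf 1)\|_\infty\le\widetilde O(\sqrt n).$$
   Context: $A\in\mathbb{R}^{D\times k}$ is a word-topic matrix (nonnegative entries, columns summing to $1$). $x^*\in\{z\in\mathbb{R}^k_{\ge0}:\sum z_i=1\}$; a document of $n$ words $w_1,\dots,w_n$ is drawn i.i.d. from the categorical distribution on $[D]$ with probabilities $Ax^*$. Assumption (A1): $R=\mathrm{supp}(x^* )$ has $|R|\le r$ and $x^*_i\ge\tau/r$ for all $i\in R$, where $\tau\in(0,1]$. Assumption (A2): for every $r$-sparse $v\in\mathbb{R}^k$, $\|Av\|_1\ge\|v\|_1/\bar\kappa$. Vectors supported on $R$ are identified with vectors in $\mathbb{R}^R$; $\mathbf 1\in\mathbb{R}^R$ is the all-ones vector. $\hat a_w\in\mathbb{R}^R$ is the $w$-th row of $A$ restricted to the columns in $R$. The restricted log-likelihood is $f(x)=\sum_{t=1}^n\log\langle\hat a_{w_t},x\rangle$, so $\nabla f(x^* )=\sum_{t=1}^n\hat a_{w_t}/\langle\hat a_{w_t},x^*\rangle$. The Fisher information matrix is $Q=\sum_{i\in[D]:\hat a_i\neq 0}\hat a_i\hat a_i^\top/\langle\hat a_i,x^*\rangle\in\mathbb{R}^{R\times R}$ (it is positive definite under (A2)).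 ''With high probability'' means with probability $1-o(1)$ as $k\to\infty$, and $\widetilde O(\cdot)$ hides constant and polylogarithmic-in-$k$ factors. *)

From Stdlib Require Import Reals Lra ClassicalDescription List.
Open Scope R_scope.

Fixpoint sumR (m : nat) (f : nat -> R) : R :=
  match m with O => 0 | S m' => sumR m' f + f m' end.

Definition indic (P : Prop) : R :=
  if excluded_middle_informative P then 1 else 0.

(* Indices 0..k-1 are topics, 0..D-1 are words.  A w i = entry (w,i) of A. *)
Definition supp (k : nat) (x : nat -> R) (i : nat) : Prop :=
  (i < k)%nat /\ x i <> 0.

Definition sumSupp (k : nat) (x : nat -> R) (f : nat -> R) : R :=
  sumR k (fun i => indic (supp k x i) * f i).

Definition ahat_dot (k : nat) (A : nat -> nat -> R) (x : nat -> R) (w : nat) : R :=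
  sumSupp k x (fun i => A w i * x i).

Definition ahat_nz (k : nat) (A : nat -> nat -> R) (x : nat -> R) (w : nat) : Prop :=
  exists i, supp k x i /\ A w i <> 0.

Definition fisher (D k : nat) (A : nat -> nat -> R) (x : nat -> R) (i j : nat) : R :=
  sumR D (fun w => indic (ahat_nz k A x w) * (A w i * A w j / ahat_dot k A x w)).

(* gradient of restricted log-likelihood at x for document ws, coordinate i in R *)
Definition grad (k : nat) (A : nat -> nat -> R) (x : nat -> R) (ws : list nat) (i : nat) : R :=
  fold_right (fun w acc => A w i / ahat_dot k A x w + acc) 0 ws.

Definition word_prob (k : nat) (A : nat -> nat -> R) (x : nat -> R) (w : nat) : R :=
  sumR k (fun i => A w i * x i).

(* expectation of f over n i.i.d. draws from p on {0..D-1} *)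
Fixpoint expect (p : nat -> R) (D n : nat) (f : list nat -> R) : R :=
  match n with
  | O => f nil
  | S n' => sumR D (fun w => p w * expect p D n' (fun l => f (w :: l)))
  end.

Definition prob (p : nat -> R) (D n : nat) (E : list nat -> Prop) : R :=
  expect p D n (fun l => indic (E l)).

Definition whitened (k : nat) (A : nat -> nat -> R) (x : nat -> R)
  (S : nat -> nat -> R) (n : nat) (ws : list nat) (i : nat) : R :=
  sumSupp k x (fun j => S i j * (grad k A x ws j - INR n)).

Definition norm2_supp (k : nat) (x : nat -> R) (y : nat -> R) : R :=
  sqrt (sumSupp k x (fun i => y i ^ 2)).

Definition word_topic (D k : nat) (A : nat -> nat -> R) : Prop :=
  (forall w i, (w < D)%nat -> (i < k)%nat -> 0 <= A w i) /\
  (forall i, (i < k)%nat -> sumR D (fun w => A w i) = 1).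

Definition in_simplex (k : nat) (x : nat -> R) : Prop :=
  (forall i, (i < k)%nat -> 0 <= x i) /\ sumR k x = 1.

Definition assumpA1 (k r : nat) (tau : R) (x : nat -> R) : Prop :=
  0 < tau <= 1 /\
  sumR k (fun i => indic (supp k x i)) <= INR r /\
  (forall i, supp k x i -> x i >= tau / INR r).

Definition sparse (k r : nat) (v : nat -> R) : Prop :=
  sumR k (fun i => indic (v i <> 0)) <= INR r.

Definition assumpA2 (D k r : nat) (kappa : R) (A : nat -> nat -> R) : Prop :=
  forall v : nat -> R, sparse k r v ->
    sumR D (fun w => Rabs (sumR k (fun i => A w i * v i))) >=
    sumR k (fun i => Rabs (v i)) / kappa.

Definition is_inv_sqrt (k : nat) (x : nat -> R) (Q S : nat -> nat -> R) : Prop :=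
  (forall i j, supp k x i -> supp k x j -> S i j = S j i) /\
  (forall v : nat -> R, (exists i, supp k x i /\ v i <> 0) ->
     0 < sumSupp k x (fun i => sumSupp k x (fun j => v i * S i j * v j))) /\
  (forall i j, supp k x i -> supp k x j ->
     sumSupp k x (fun l => sumSupp k x (fun m => S i l * S l m * Q m j))
     = if Nat.eq_dec i j then 1 else 0).

From Stdlib Require Import Reals List Lra Psatz Classical ClassicalDescription.
Open Scope R_scope.

(* The whitened gradient is a sum of n i.i.d. copies of the vector
   Y_w = S (a_w / <a_w, x*> - 1) indexed by the drawn word w.  Y has mean zero and covariance
   S (Q - 1 1^T) S <= S Q S, a projection because S S Q = I, so every coordinate of Y has
   variance at most 1.  Since Q^{-1} = S S and (A2) gives |v|_1^2 <= kappa^2 v^T Q v, the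
   entries of S are at most kappa, and together with x*_i >= tau / r this bounds each coordinate
   of Y by 2 kappa r / tau <= sqrt n.  An exponential-moment (Bernstein) bound with
   lambda = 1 / (2 sqrt n) gives P(|W_i| > 6 log k sqrt n) <= 4 / k^3 for each coordinate; a
   union bound over the support yields the sup-norm bound, and |W|_2 <= sqrt r |W|_inf the
   Euclidean one, both with probability at least 1 - 4 / k^2. *)

Lemma indic_true (P : Prop) : P -> indic P = 1.
Proof. intro H; unfold indic; destruct (excluded_middle_informative P); tauto. Qed.

Lemma indic_false (P : Prop) : ~ P -> indic P = 0.
Proof. intro H; unfold indic; destruct (excluded_middle_informative P); tauto. Qed.

Lemma indic_bounds (P : Prop) : 0 <= indic P <= 1.
Proof. unfold indic; destruct (excluded_middle_informative P); lra. Qed.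

Lemma indic_le (P Q : Prop) : (P -> Q) -> indic P <= indic Q.
Proof.
  intro H; unfold indic.
  destruct (excluded_middle_informative P), (excluded_middle_informative Q); try lra; tauto.
Qed.

Lemma sumR_ext m f g : (forall i, (i < m)%nat -> f i = g i) -> sumR m f = sumR m g.
Proof.
  induction m as [|m IH]; simpl; intros H; auto.
  rewrite IH, (H m) by (try intros; try apply H; lia); auto.
Qed.

Lemma sumR_add m f g : sumR m (fun i => f i + g i) = sumR m f + sumR m g.
Proof. induction m as [|m IH]; simpl; [lra | rewrite IH; lra]. Qed.

Lemma sumR_sub m f g : sumR m (fun i => f i - g i) = sumR m f - sumR m g.
Proof. induction m as [|m IH]; simpl; [lra | rewrite IH; lra]. Qed.

Lemma sumR_scal m c f : sumR m (fun i => c * f i) = c * sumR m f.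
Proof. induction m as [|m IH]; simpl; [lra | rewrite IH; lra]. Qed.

Lemma sumR_0 m : sumR m (fun _ => 0) = 0.
Proof. induction m as [|m IH]; simpl; [lra | rewrite IH; lra]. Qed.

Lemma sumR_const m c : sumR m (fun _ => c) = INR m * c.
Proof. induction m as [|m IH]; simpl sumR; [simpl; lra | rewrite IH, S_INR; lra]. Qed.

Lemma sumR_swap m n (F : nat -> nat -> R) :
  sumR m (fun i => sumR n (fun j => F i j)) = sumR n (fun j => sumR m (fun i => F i j)).
Proof.
  induction m as [|m IH]; simpl; [now rewrite sumR_0 |].
  now rewrite IH, <- sumR_add.
Qed.

Lemma sumR_le m f g : (forall i, (i < m)%nat -> f i <= g i) -> sumR m f <= sumR m g.
Proof.
  induction m as [|m IH]; simpl; intros H; [lra |].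
  specialize (IH (fun i Hi => H i ltac:(lia))); specialize (H m ltac:(lia)); lra.
Qed.

Lemma sumR_ge0 m f : (forall i, (i < m)%nat -> 0 <= f i) -> 0 <= sumR m f.
Proof. intro H; rewrite <- (sumR_0 m); now apply sumR_le. Qed.

Lemma sumR_ge_term m f j :
  (forall i, (i < m)%nat -> 0 <= f i) -> (j < m)%nat -> f j <= sumR m f.
Proof.
  induction m as [|m IH]; simpl; intros H Hj; [lia |].
  pose proof (sumR_ge0 m f (fun i Hi => H i ltac:(lia))).
  destruct (Nat.eq_dec j m) as [->|]; [lra |].
  specialize (IH (fun i Hi => H i ltac:(lia)) ltac:(lia)); specialize (H m ltac:(lia)); lra.
Qed.

Lemma sumR_unit m g a :
  (a < m)%nat -> (forall j, (j < m)%nat -> j <> a -> g j = 0) -> sumR m g = g a.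
Proof.
  induction m as [|m IH]; simpl; intros Ha H; [lia |].
  destruct (Nat.eq_dec a m) as [->|].
  - rewrite (sumR_ext _ _ (fun _ => 0)), sumR_0 by (intros; apply H; lia); ring.
  - rewrite IH, (H m) by (try intros; try apply H; lia); ring.
Qed.

Section SupportSums.

Variables (k : nat) (x : nat -> R).

Lemma sumSupp_ext f g : (forall i, supp k x i -> f i = g i) -> sumSupp k x f = sumSupp k x g.
Proof.
  intro H; apply sumR_ext; intros i Hi.
  destruct (classic (supp k x i)) as [Hs|Hs].
  - now rewrite H.
  - now rewrite indic_false, !Rmult_0_l.
Qed.

Lemma sumSupp_add f g : sumSupp k x (fun i => f i + g i) = sumSupp k x f + sumSupp k x g.
Proof. unfold sumSupp; rewrite <- sumR_add; apply sumR_ext; intros; ring. Qed.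

Lemma sumSupp_sub f g : sumSupp k x (fun i => f i - g i) = sumSupp k x f - sumSupp k x g.
Proof. unfold sumSupp; rewrite <- sumR_sub; apply sumR_ext; intros; ring. Qed.

Lemma sumSupp_scal c f : sumSupp k x (fun i => c * f i) = c * sumSupp k x f.
Proof. unfold sumSupp; rewrite <- sumR_scal; apply sumR_ext; intros; ring. Qed.

Lemma sumSupp_scalr c f : sumSupp k x (fun i => f i * c) = sumSupp k x f * c.
Proof. rewrite Rmult_comm, <- sumSupp_scal; apply sumSupp_ext; intros; ring. Qed.

Lemma sumSupp_0 : sumSupp k x (fun _ => 0) = 0.
Proof.
  unfold sumSupp; transitivity (sumR k (fun _ => 0)); [apply sumR_ext; intros; ring | apply sumR_0].
Qed.

Lemma sumSupp_le f g : (forall i, supp k x i -> f i <= g i) -> sumSupp k x f <= sumSupp k x g.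
Proof.
  intro H; apply sumR_le; intros i Hi.
  destruct (classic (supp k x i)) as [Hs|Hs].
  - rewrite indic_true by auto; specialize (H i Hs); lra.
  - rewrite indic_false by auto; lra.
Qed.

Lemma sumSupp_ge0 f : (forall i, supp k x i -> 0 <= f i) -> 0 <= sumSupp k x f.
Proof. intro H; rewrite <- sumSupp_0; now apply sumSupp_le. Qed.

Lemma sumSupp_ge_term f j :
  (forall i, supp k x i -> 0 <= f i) -> supp k x j -> f j <= sumSupp k x f.
Proof.
  intros H Hj.
  replace (f j) with (indic (supp k x j) * f j) by (rewrite indic_true; auto; ring).
  apply (sumR_ge_term k (fun i => indic (supp k x i) * f i)); [| apply Hj].
  intros i _; destruct (classic (supp k x i)) as [Hs|Hs].
  - rewrite indic_true by auto; specialize (H i Hs); lra.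
  - rewrite indic_false by auto; lra.
Qed.

Lemma sumSupp_unit f a :
  supp k x a -> (forall j, supp k x j -> j <> a -> f j = 0) -> sumSupp k x f = f a.
Proof.
  intros Ha H; unfold sumSupp; rewrite (sumR_unit k _ a); [| apply Ha |].
  - rewrite indic_true; auto; ring.
  - intros j Hj Hja; destruct (classic (supp k x j)).
    + rewrite H; auto; ring.
    + rewrite indic_false; auto; ring.
Qed.

Lemma sumSupp_const c : sumSupp k x (fun _ => c) = sumR k (fun i => indic (supp k x i)) * c.
Proof. unfold sumSupp; rewrite Rmult_comm, <- sumR_scal; apply sumR_ext; intros; ring. Qed.

Lemma card_supp_le : sumR k (fun i => indic (supp k x i)) <= INR k.
Proof.
  rewrite <- (Rmult_1_r (INR k)), <- sumR_const; apply sumR_le; intros i _; apply indic_bounds.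
Qed.

Lemma norm2_supp_le y t r :
  0 <= t -> sumR k (fun i => indic (supp k x i)) <= INR r ->
  (forall i, supp k x i -> Rabs (y i) <= t) -> norm2_supp k x y <= t * sqrt (INR r).
Proof.
  intros Ht Hr Hy; unfold norm2_supp.
  rewrite <- (sqrt_square t) at 1 by auto; rewrite <- sqrt_mult by (nra || apply pos_INR).
  apply sqrt_le_1_alt; transitivity (sumSupp k x (fun _ => t * t)).
  - apply sumSupp_le; intros i Hi; rewrite <- pow2_abs.
    pose proof (Hy i Hi); pose proof (Rabs_pos (y i)); nra.
  - rewrite sumSupp_const; nra.
Qed.

Lemma norm2_supp_gt_exists y t r :
  0 <= t -> sumR k (fun i => indic (supp k x i)) <= INR r ->
  norm2_supp k x y > t * sqrt (INR r) -> exists i, supp k x i /\ Rabs (y i) > t.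
Proof.
  intros Ht Hr Hy; apply NNPP; intros Hno.
  apply (Rlt_not_le _ _ Hy), norm2_supp_le; auto.
  intros i Hi; apply Rnot_lt_le; intros Hgt; apply Hno; now exists i.
Qed.

Lemma sumSupp_abs f : Rabs (sumSupp k x f) <= sumSupp k x (fun j => Rabs (f j)).
Proof.
  apply Rabs_le; split.
  - replace (- _) with (sumSupp k x (fun j => -1 * Rabs (f j)))
      by (rewrite sumSupp_scal; ring).
    apply sumSupp_le; intros i _; pose proof (Rle_abs (- f i)).
    rewrite Rabs_Ropp in *; lra.
  - apply sumSupp_le; intros; apply Rle_abs.
Qed.

Lemma sumR_sumSupp_swap m (F : nat -> nat -> R) :
  sumR m (fun w => sumSupp k x (fun j => F w j)) = sumSupp k x (fun j => sumR m (fun w => F w j)).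
Proof.
  unfold sumSupp; rewrite sumR_swap; apply sumR_ext; intros.
  now rewrite <- sumR_scal.
Qed.

Lemma sumSupp_swap (F : nat -> nat -> R) :
  sumSupp k x (fun i => sumSupp k x (fun j => F i j))
  = sumSupp k x (fun j => sumSupp k x (fun i => F i j)).
Proof.
  unfold sumSupp at 1.
  rewrite (sumR_ext _ _ (fun i => sumSupp k x (fun j => indic (supp k x i) * F i j)))
    by (intros; now rewrite <- sumSupp_scal).
  now rewrite sumR_sumSupp_swap.
Qed.

Lemma sumSupp_mul f g :
  sumSupp k x f * sumSupp k x g = sumSupp k x (fun j => sumSupp k x (fun l => f j * g l)).
Proof.
  rewrite <- sumSupp_scalr; apply sumSupp_ext; intros j _.
  now rewrite <- sumSupp_scal.
Qed.

End SupportSums.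

Definition foldsum (g : nat -> R) (l : list nat) : R := fold_right (fun w acc => g w + acc) 0 l.

Lemma foldsum_scal c g l : foldsum (fun w => c * g w) l = c * foldsum g l.
Proof. induction l as [|w l IH]; unfold foldsum in *; simpl; [ring | rewrite IH; ring]. Qed.

Lemma sumSupp_foldsum k x (G : nat -> nat -> R) l :
  sumSupp k x (fun j => foldsum (fun w => G w j) l) = foldsum (fun w => sumSupp k x (fun j => G w j)) l.
Proof.
  induction l as [|w l IH]; unfold foldsum in *; simpl; [apply sumSupp_0 |].
  now rewrite sumSupp_add, IH.
Qed.

Section Expectation.

Variables (p : nat -> R) (D : nat).

Lemma expect_ext n f g :
  (forall l, length l = n -> f l = g l) -> expect p D n f = expect p D n g.
Proof.
  revert f g; induction n as [|n IH]; simpl; intros f g H; [now apply H |].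
  apply sumR_ext; intros w _; f_equal; apply IH.
  intros l Hl; apply H; simpl; auto.
Qed.

Lemma expect_add n f g : expect p D n (fun l => f l + g l) = expect p D n f + expect p D n g.
Proof.
  revert f g; induction n as [|n IH]; simpl; intros f g; auto.
  rewrite <- sumR_add; apply sumR_ext; intros w _.
  rewrite (IH (fun l => f (w :: l))); ring.
Qed.

Lemma expect_scal n c f : expect p D n (fun l => c * f l) = c * expect p D n f.
Proof.
  revert f; induction n as [|n IH]; simpl; intros f; auto.
  rewrite <- sumR_scal; apply sumR_ext; intros w _.
  rewrite (IH (fun l => f (w :: l))); ring.
Qed.

Lemma expect_sumR n m F :
  expect p D n (fun l => sumR m (fun i => F i l)) = sumR m (fun i => expect p D n (F i)).
Proof.
  induction m as [|m IH]; simpl.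
  - transitivity (expect p D n (fun _ => 0 * 0)); [apply expect_ext; intros; ring |].
    rewrite (expect_scal n 0 (fun _ => 0)); ring.
  - now rewrite expect_add, IH.
Qed.

Lemma expect_sumSupp n k x F :
  expect p D n (fun l => sumSupp k x (fun i => F i l)) = sumSupp k x (fun i => expect p D n (F i)).
Proof. unfold sumSupp; rewrite expect_sumR; apply sumR_ext; intros; apply expect_scal. Qed.

Lemma expect_exp_foldsum n g a :
  expect p D n (fun l => exp (a + foldsum g l)) = exp a * sumR D (fun w => p w * exp (g w)) ^ n.
Proof.
  revert a; induction n as [|n IH]; intros a; simpl.
  - unfold foldsum; simpl; rewrite Rplus_0_r; ring.
  - set (M := sumR D (fun w => p w * exp (g w))).
    replace (exp a * (M * M ^ n)) with ((exp a * M ^ n) * M) by ring.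
    unfold M at 2; rewrite <- sumR_scal; apply sumR_ext; intros w _.
    rewrite (expect_ext _ _ (fun l => exp ((a + g w) + foldsum g l)))
      by (intros; unfold foldsum; simpl; f_equal; ring).
    rewrite IH, exp_plus; unfold M; ring.
Qed.

Hypothesis p_ge0 : forall w, (w < D)%nat -> 0 <= p w.

Lemma expect_le n f g : (forall l, f l <= g l) -> expect p D n f <= expect p D n g.
Proof.
  revert f g; induction n as [|n IH]; simpl; intros f g H; auto.
  apply sumR_le; intros w Hw; apply Rmult_le_compat_l; auto.
Qed.

Lemma prob_mono n (E F : list nat -> Prop) :
  (forall l, E l -> F l) -> prob p D n E <= prob p D n F.
Proof. intros H; apply expect_le; intros l; apply indic_le, H. Qed.

Lemma prob_exists_supp_le n k x (E : nat -> list nat -> Prop) :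
  prob p D n (fun l => exists i, supp k x i /\ E i l) <= sumSupp k x (fun i => prob p D n (E i)).
Proof.
  unfold prob; rewrite <- expect_sumSupp; apply expect_le; intros l.
  destruct (classic (exists i, supp k x i /\ E i l)) as [[i [Hi HE]]|Hno].
  - rewrite indic_true by eauto; rewrite <- (indic_true (E i l)) by auto.
    apply (sumSupp_ge_term k x (fun j => indic (E j l))); auto.
    intros; apply indic_bounds.
  - rewrite indic_false by auto; apply sumSupp_ge0; intros; apply indic_bounds.
Qed.

End Expectation.

Lemma exp_le_quadratic y : y <= 1/2 -> exp y <= 1 + y + 2 * y ^ 2.
Proof.
  intros Hy; pose proof (exp_ineq1_le (- y)); pose proof (exp_pos y).
  assert (exp y * exp (- y) = 1) by (rewrite <- exp_plus, Rplus_opp_r; apply exp_0).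
  assert (1 <= (1 + y + 2 * y ^ 2) * (1 - y)) by (pose proof (pow2_ge_0 y); simpl; nra).
  nra.
Qed.

Lemma exp_pow y n : exp y ^ n = exp (INR n * y).
Proof.
  induction n as [|n IH]; [simpl; now rewrite Rmult_0_l, exp_0 |].
  rewrite S_INR, <- tech_pow_Rmult, IH, <- exp_plus; f_equal; ring.
Qed.

Lemma exp_half_le_2 : exp (1/2) <= 2.
Proof.
  assert (exp (1/2) * exp (1/2) = exp 1) by (rewrite <- exp_plus; f_equal; lra).
  pose proof exp_le_3; pose proof (exp_pos (1/2)); nra.
Qed.

Lemma indic_abs_gt_le_exp y t lam :
  0 < lam -> indic (Rabs y > t) <= exp (lam * y - lam * t) + exp (- lam * y - lam * t).
Proof.
  intros Hlam; pose proof (exp_pos (lam * y - lam * t)); pose proof (exp_pos (- lam * y - lam * t)).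
  destruct (classic (Rabs y > t)) as [Hy|Hy]; [| rewrite indic_false by auto; lra].
  rewrite indic_true by auto.
  pose proof (exp_ineq1_le (lam * y - lam * t)); pose proof (exp_ineq1_le (- lam * y - lam * t)).
  destruct (Rle_dec 0 y).
  - rewrite Rabs_pos_eq in Hy by auto; nra.
  - rewrite Rabs_left in Hy by lra; nra.
Qed.

Section Bernstein.

Variables (p : nat -> R) (D : nat) (Y : nat -> R).

Hypothesis p_ge0 : forall w, (w < D)%nat -> 0 <= p w.
Hypothesis p_sum1 : sumR D p = 1.
Hypothesis Y_mean0 : sumR D (fun w => p w * Y w) = 0.
Hypothesis Y_second_moment_le1 : sumR D (fun w => p w * Y w ^ 2) <= 1.

Let mgf c := sumR D (fun w => p w * exp (c * Y w)).

Lemma mgf_le c :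
  (forall w, (w < D)%nat -> p w <> 0 -> c * Y w <= 1/2) -> mgf c <= 1 + 2 * c ^ 2.
Proof.
  intros Hc; unfold mgf.
  transitivity (sumR D (fun w => p w * 1 + c * (p w * Y w) + 2 * c ^ 2 * (p w * Y w ^ 2))).
  - apply sumR_le; intros w Hw.
    destruct (Req_dec (p w) 0) as [->|Hp]; [lra |].
    replace (p w * 1 + _ + _) with (p w * (1 + c * Y w + 2 * (c * Y w) ^ 2)) by ring.
    apply Rmult_le_compat_l, exp_le_quadratic; auto.
  - rewrite !sumR_add, !sumR_scal, Y_mean0, (sumR_ext _ _ p) by (intros; ring).
    pose proof (pow2_ge_0 c); nra.
Qed.

Lemma mgf_pow_le n c :
  (forall w, (w < D)%nat -> p w <> 0 -> c * Y w <= 1/2) -> INR n * c ^ 2 = / 4 -> mgf c ^ n <= 2.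
Proof.
  intros Hc Hn.
  assert (Hm : 0 <= mgf c).
  { apply sumR_ge0; intros w Hw; pose proof (p_ge0 w Hw); pose proof (exp_pos (c * Y w)); nra. }
  transitivity ((1 + 2 * c ^ 2) ^ n); [apply pow_incr; split; auto; now apply mgf_le |].
  transitivity (exp (2 * c ^ 2) ^ n); [apply pow_incr; split; [pose proof (pow2_ge_0 c); lra | apply exp_ineq1_le] |].
  rewrite exp_pow; replace (INR n * (2 * c ^ 2)) with (1/2) by lra; apply exp_half_le_2.
Qed.

Lemma prob_abs_foldsum_gt_le n s :
  (0 < n)%nat -> (forall w, (w < D)%nat -> p w <> 0 -> Rabs (Y w) <= sqrt (INR n)) ->
  prob p D n (fun l => Rabs (foldsum Y l) > 2 * s * sqrt (INR n)) <= 4 * exp (- s).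
Proof.
  intros Hn HY.
  assert (Hsn : 0 < sqrt (INR n)) by (apply sqrt_lt_R0, lt_0_INR; lia).
  set (lam := / (2 * sqrt (INR n))).
  assert (Hlam : 0 < lam) by (apply Rinv_0_lt_compat; lra).
  assert (Hlam2 : INR n * lam ^ 2 = / 4).
  { unfold lam; rewrite <- (sqrt_sqrt (INR n)) at 1 by apply pos_INR; field; lra. }
  assert (Hsmall : forall c, Rabs c = lam ->
            forall w, (w < D)%nat -> p w <> 0 -> c * Y w <= 1/2).
  { intros c Hc w Hw Hp; eapply Rle_trans; [apply Rle_abs |].
    rewrite Rabs_mult, Hc; pose proof (HY w Hw Hp); pose proof (Rabs_pos (Y w)).
    replace (1/2) with (lam * sqrt (INR n)) by (unfold lam; field; lra).
    now apply Rmult_le_compat_l; [lra |]. }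
  unfold prob; etransitivity.
  { apply (expect_le p D p_ge0 n _
      (fun l => exp (- s + foldsum (fun w => lam * Y w) l) + exp (- s + foldsum (fun w => - lam * Y w) l))).
    intros l; rewrite !foldsum_scal.
    replace (- s) with (- (lam * (2 * s * sqrt (INR n)))) by (unfold lam; field; lra).
    eapply Rle_trans; [apply (indic_abs_gt_le_exp _ _ lam Hlam) | right; f_equal; f_equal; ring]. }
  rewrite expect_add, !expect_exp_foldsum.
  pose proof (mgf_pow_le n lam (Hsmall lam (Rabs_pos_eq _ (Rlt_le _ _ Hlam))) Hlam2).
  assert (mgf (- lam) ^ n <= 2).
  { apply mgf_pow_le; [apply Hsmall; rewrite Rabs_Ropp; apply Rabs_pos_eq; lra | lra]. }
  unfold mgf in *; pose proof (exp_pos (- s)); nra.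
Qed.

End Bernstein.

Section SupportMatrices.

Variables (k : nat) (x : nat -> R).

Definition mulmx_supp (F G : nat -> nat -> R) (a b : nat) : R :=
  sumSupp k x (fun j => F a j * G j b).

Definition idmx (a b : nat) : R := if Nat.eq_dec a b then 1 else 0.

Definition quadform_supp (M : nat -> nat -> R) (z : nat -> R) : R :=
  sumSupp k x (fun j => sumSupp k x (fun l => z j * M j l * z l)).

Lemma mulmx_supp_assoc F G H a b :
  mulmx_supp (mulmx_supp F G) H a b = mulmx_supp F (mulmx_supp G H) a b.
Proof.
  unfold mulmx_supp.
  rewrite (sumSupp_ext k x _ (fun l => sumSupp k x (fun j => F a j * G j l * H l b)))
    by (intros; now rewrite <- sumSupp_scalr).
  rewrite sumSupp_swap; apply sumSupp_ext; intros j _.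
  rewrite <- sumSupp_scal; apply sumSupp_ext; intros; ring.
Qed.

Lemma mulmx_supp_extl F F' G a b :
  (forall j, supp k x j -> F a j = F' a j) -> mulmx_supp F G a b = mulmx_supp F' G a b.
Proof. intros H; apply sumSupp_ext; intros j Hj; now rewrite H. Qed.

Lemma mulmx_supp_extr F G G' a b :
  (forall j, supp k x j -> G j b = G' j b) -> mulmx_supp F G a b = mulmx_supp F G' a b.
Proof. intros H; apply sumSupp_ext; intros j Hj; now rewrite H. Qed.

Lemma mulmx_supp_id_l G a b : supp k x a -> mulmx_supp idmx G a b = G a b.
Proof.
  intros Ha; unfold mulmx_supp, idmx; rewrite (sumSupp_unit k x _ a Ha).
  - destruct (Nat.eq_dec a a); [ring | lia].
  - intros j _ Hj; destruct (Nat.eq_dec a j); [lia | ring].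
Qed.

Section InverseSquareRoot.

Variables (Q S : nat -> nat -> R).

Hypothesis Q_sym : forall i j, Q i j = Q j i.
Hypothesis S_inv_sqrt : is_inv_sqrt k x Q S.

Lemma inv_sqrt_sym i j : supp k x i -> supp k x j -> S i j = S j i.
Proof. apply S_inv_sqrt. Qed.

Lemma inv_sqrt_mul_SSQ i j :
  supp k x i -> supp k x j -> mulmx_supp S (mulmx_supp S Q) i j = idmx i j.
Proof.
  intros Hi Hj; unfold idmx; rewrite <- (proj2 (proj2 S_inv_sqrt)) by auto.
  unfold mulmx_supp; apply sumSupp_ext; intros l _.
  rewrite <- sumSupp_scal; apply sumSupp_ext; intros; ring.
Qed.

Let T := mulmx_supp (mulmx_supp S Q) S.

Lemma SQS_idem a b : supp k x a -> supp k x b -> mulmx_supp T T a b = T a b.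
Proof.
  intros Ha Hb; unfold T; rewrite mulmx_supp_assoc; apply mulmx_supp_extr; intros j Hj.
  rewrite <- mulmx_supp_assoc, (mulmx_supp_extl _ idmx), mulmx_supp_id_l; auto.
  intros; now apply inv_sqrt_mul_SSQ.
Qed.

Lemma SQS_sym a b : supp k x a -> supp k x b -> T a b = T b a.
Proof.
  intros Ha Hb; unfold T, mulmx_supp.
  rewrite (sumSupp_ext k x _ (fun l => sumSupp k x (fun j => S a j * Q j l * S l b))),
    (sumSupp_ext k x (fun j => sumSupp k x (fun l => S b l * Q l j) * S j a)
       (fun l => sumSupp k x (fun j => S b j * Q j l * S l a)))
    by (intros; now rewrite <- sumSupp_scalr).
  rewrite sumSupp_swap; apply sumSupp_ext; intros l Hl; apply sumSupp_ext; intros j Hj.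
  rewrite (inv_sqrt_sym a l), (inv_sqrt_sym j b), (Q_sym l j) by auto; ring.
Qed.

Lemma SQS_diag_le1 i : supp k x i -> T i i <= 1.
Proof.
  intros Hi.
  assert (E : T i i = sumSupp k x (fun b => T i b ^ 2)).
  { rewrite <- SQS_idem by auto; apply sumSupp_ext; intros b Hb.
    rewrite (SQS_sym b i) by auto; ring. }
  assert (T i i ^ 2 <= T i i).
  { rewrite E at 2; apply (sumSupp_ge_term k x (fun b => T i b ^ 2)); auto.
    intros; apply pow2_ge_0. }
  nra.
Qed.

Let P := mulmx_supp S S.

Lemma quadform_SS_row i : supp k x i -> quadform_supp Q (fun j => P i j) = P i i.
Proof.
  intros Hi; transitivity (mulmx_supp (mulmx_supp P Q) P i i).
  - unfold quadform_supp; rewrite sumSupp_swap; apply sumSupp_ext; intros l Hl.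
    assert (E : P l i = P i l).
    { apply sumSupp_ext; intros m Hm; rewrite (inv_sqrt_sym l m), (inv_sqrt_sym m i) by auto; ring. }
    rewrite E; unfold mulmx_supp at 1; rewrite <- sumSupp_scalr; apply sumSupp_ext; intros; ring.
  - rewrite (mulmx_supp_extl _ idmx), mulmx_supp_id_l; auto.
    intros j Hj; unfold P; rewrite mulmx_supp_assoc; now apply inv_sqrt_mul_SSQ.
Qed.

Lemma inv_sqrt_sq_le i j : supp k x i -> supp k x j -> S i j ^ 2 <= P i i.
Proof.
  intros Hi Hj; unfold P, mulmx_supp.
  rewrite (sumSupp_ext k x _ (fun l => S i l ^ 2))
    by (intros l Hl; rewrite (inv_sqrt_sym l i) by auto; ring).
  apply (sumSupp_ge_term k x (fun l => S i l ^ 2)); auto; intros; apply pow2_ge_0.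
Qed.

End InverseSquareRoot.

End SupportMatrices.

Lemma word_prob_eq_ahat_dot k A x w : word_prob k A x w = ahat_dot k A x w.
Proof.
  apply sumR_ext; intros i Hi.
  destruct (classic (x i = 0)) as [->|Hx]; [ring |].
  rewrite indic_true; [ring | now split].
Qed.

Lemma fisher_sym D k A x j l : fisher D k A x j l = fisher D k A x l j.
Proof. apply sumR_ext; intros; f_equal; unfold Rdiv; ring. Qed.

Section TopicModel.

Variables (D k : nat) (A : nat -> nat -> R) (x : nat -> R).

(* For words of probability 0 this is [-1] (as [/ 0 = 0]); such words carry no weight. *)
Definition centred_ratio (w j : nat) : R := A w j / ahat_dot k A x w - 1.

Definition whitened_increment (S : nat -> nat -> R) (w i : nat) : R :=
  sumSupp k x (fun j => S i j * centred_ratio w j).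

Lemma grad_sub_length ws j :
  grad k A x ws j - INR (length ws) = foldsum (fun w => centred_ratio w j) ws.
Proof.
  induction ws as [|w ws IH]; [unfold grad; simpl; lra |].
  unfold grad, foldsum, centred_ratio in *; simpl length; rewrite S_INR; simpl fold_right; lra.
Qed.

Lemma whitened_foldsum S n ws i :
  length ws = n -> whitened k A x S n ws i = foldsum (fun w => whitened_increment S w i) ws.
Proof.
  intros <-; unfold whitened, whitened_increment; rewrite <- sumSupp_foldsum.
  apply sumSupp_ext; intros j _; rewrite grad_sub_length, <- foldsum_scal; reflexivity.
Qed.

Hypothesis A_word_topic : word_topic D k A.
Hypothesis x_simplex : in_simplex k x.

Lemma supp_pos i : supp k x i -> 0 < x i.
Proof. intros [Hi Hx]; pose proof (proj1 x_simplex i Hi); lra. Qed.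

Lemma word_prob_ge0 w : (w < D)%nat -> 0 <= word_prob k A x w.
Proof.
  intros Hw; apply sumR_ge0; intros i Hi.
  pose proof (proj1 A_word_topic w i Hw Hi); pose proof (proj1 x_simplex i Hi); nra.
Qed.

Lemma word_prob_sum1 : sumR D (word_prob k A x) = 1.
Proof.
  unfold word_prob; rewrite sumR_swap, <- (proj2 x_simplex); apply sumR_ext; intros i Hi.
  rewrite (sumR_ext _ _ (fun w => x i * A w i)), sumR_scal, (proj2 A_word_topic) by (auto; intros; ring).
  ring.
Qed.

Lemma ahat_dot_ge_term w j : (w < D)%nat -> supp k x j -> A w j * x j <= ahat_dot k A x w.
Proof.
  intros Hw Hj; apply (sumSupp_ge_term k x (fun i => A w i * x i)); auto.
  intros i [Hi _]; pose proof (proj1 A_word_topic w i Hw Hi); pose proof (proj1 x_simplex i Hi); nra.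
Qed.

Lemma ahat_dot_eq0_coef w j : (w < D)%nat -> supp k x j -> ahat_dot k A x w = 0 -> A w j = 0.
Proof.
  intros Hw Hj H0; pose proof (ahat_dot_ge_term w j Hw Hj); pose proof (supp_pos j Hj).
  pose proof (proj1 A_word_topic w j Hw (proj1 Hj)); nra.
Qed.

Lemma centred_ratio_mean0 j : supp k x j -> sumR D (fun w => word_prob k A x w * centred_ratio w j) = 0.
Proof.
  intros Hj; rewrite (sumR_ext _ _ (fun w => A w j - word_prob k A x w)).
  - rewrite sumR_sub, word_prob_sum1, (proj2 A_word_topic) by apply Hj; ring.
  - intros w Hw; rewrite word_prob_eq_ahat_dot; unfold centred_ratio.
    destruct (Req_dec (ahat_dot k A x w) 0) as [E|E].
    + rewrite E, (ahat_dot_eq0_coef w j) by auto; unfold Rdiv; ring.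
    + field; auto.
Qed.

Lemma centred_ratio_cov j l : supp k x j -> supp k x l ->
  sumR D (fun w => word_prob k A x w * (centred_ratio w j * centred_ratio w l)) = fisher D k A x j l - 1.
Proof.
  intros Hj Hl.
  rewrite (sumR_ext _ _ (fun w => indic (ahat_nz k A x w) * (A w j * A w l / ahat_dot k A x w)
                                  - A w j - A w l + word_prob k A x w)).
  - rewrite !sumR_add, !sumR_sub, word_prob_sum1, !(proj2 A_word_topic) by (apply Hj || apply Hl).
    unfold fisher; ring.
  - intros w Hw; rewrite word_prob_eq_ahat_dot; unfold centred_ratio.
    destruct (Req_dec (ahat_dot k A x w) 0) as [E|E].
    + rewrite E, !(ahat_dot_eq0_coef w j), !(ahat_dot_eq0_coef w l) by auto; unfold Rdiv; ring.
    + destruct (Req_dec (A w j) 0) as [->|Ej]; [field; auto |].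
      rewrite indic_true by (exists j; auto); field; auto.
Qed.

Lemma increment_mean0 S i : sumR D (fun w => word_prob k A x w * whitened_increment S w i) = 0.
Proof.
  unfold whitened_increment.
  rewrite (sumR_ext _ _ (fun w => sumSupp k x (fun j => S i j * (word_prob k A x w * centred_ratio w j))))
    by (intros; rewrite <- sumSupp_scal; apply sumSupp_ext; intros; ring).
  rewrite sumR_sumSupp_swap, <- (sumSupp_0 k x); apply sumSupp_ext; intros j Hj.
  rewrite sumR_scal, centred_ratio_mean0 by auto; ring.
Qed.

Lemma increment_second_moment_le1 S i :
  is_inv_sqrt k x (fisher D k A x) S -> supp k x i ->
  sumR D (fun w => word_prob k A x w * whitened_increment S w i ^ 2) <= 1.
Proof.
  intros HS Hi.
  assert (E : sumR D (fun w => word_prob k A x w * whitened_increment S w i ^ 2)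
              = mulmx_supp k x (mulmx_supp k x S (fisher D k A x)) S i i
                - sumSupp k x (fun j => S i j) ^ 2).
  { unfold whitened_increment.
    rewrite (sumR_ext _ _ (fun w => sumSupp k x (fun j => sumSupp k x (fun l =>
               S i j * S i l * (word_prob k A x w * (centred_ratio w j * centred_ratio w l))))))
      by (intros; simpl; rewrite Rmult_1_r, sumSupp_mul, <- sumSupp_scal; apply sumSupp_ext;
          intros; rewrite <- sumSupp_scal; apply sumSupp_ext; intros; ring).
    rewrite sumR_sumSupp_swap.
    rewrite (sumSupp_ext k x _ (fun j => sumSupp k x (fun l => S i j * S i l * fisher D k A x j l)
                                          - sumSupp k x (fun l => S i j * S i l)))
      by (intros j Hj; rewrite sumR_sumSupp_swap, <- sumSupp_sub; apply sumSupp_ext; intros l Hl;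
          rewrite sumR_scal, centred_ratio_cov by auto; ring).
    rewrite sumSupp_sub; simpl; rewrite Rmult_1_r, sumSupp_mul; f_equal.
    unfold mulmx_supp; rewrite sumSupp_swap; apply sumSupp_ext; intros l Hl.
    rewrite <- sumSupp_scalr, (inv_sqrt_sym k x _ S HS l i) by auto.
    apply sumSupp_ext; intros; ring. }
  rewrite E; pose proof (SQS_diag_le1 k x _ S (fisher_sym D k A x) HS i Hi).
  pose proof (pow2_ge_0 (sumSupp k x (fun j => S i j))); lra.
Qed.

End TopicModel.

Lemma Rinv_ge0 a : 0 <= a -> 0 <= / a.
Proof.
  intros Ha; destruct (Req_dec a 0) as [->|Ha0]; [rewrite Rinv_0; lra |].
  left; apply Rinv_0_lt_compat; lra.
Qed.

Lemma abs_le_amgm s d a : 0 < d -> 0 < a -> Rabs s <= a * d / 2 + s ^ 2 / d / (2 * a).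
Proof.
  intros Hd Ha; apply (Rmult_le_reg_r (2 * a * d)); [nra |].
  replace ((a * d / 2 + s ^ 2 / d / (2 * a)) * (2 * a * d)) with ((a * d) ^ 2 + s ^ 2) by (field; lra).
  assert (Rabs s * Rabs s = s ^ 2) by (rewrite <- Rabs_mult, Rabs_pos_eq; [ring | nra]).
  pose proof (pow2_ge_0 (Rabs s - a * d)); pose proof (Rabs_pos s); nra.
Qed.

Section Identifiability.

Variables (D k : nat) (A : nat -> nat -> R) (x : nat -> R) (r : nat) (kappa : R).

Hypothesis A_word_topic : word_topic D k A.
Hypothesis x_simplex : in_simplex k x.
Hypothesis card_supp_le : sumR k (fun i => indic (supp k x i)) <= INR r.
Hypothesis kappa_pos : 0 < kappa.
Hypothesis A_identifiable : assumpA2 D k r kappa A.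

Let Q := fisher D k A x.

Definition topic_mix (z : nat -> R) (w : nat) : R := sumSupp k x (fun j => A w j * z j).

Lemma quadform_fisher z :
  quadform_supp k x Q z
  = sumR D (fun w => indic (ahat_nz k A x w) * topic_mix z w ^ 2 / ahat_dot k A x w).
Proof.
  unfold quadform_supp, Q, fisher.
  rewrite (sumSupp_ext k x _ (fun j => sumR D (fun w => sumSupp k x (fun l =>
             indic (ahat_nz k A x w) / ahat_dot k A x w * ((A w j * z j) * (A w l * z l))))))
    by (intros j _; rewrite sumR_sumSupp_swap; apply sumSupp_ext; intros l _;
        rewrite <- sumR_scal, Rmult_comm, <- sumR_scal; apply sumR_ext; intros; unfold Rdiv; ring).
  rewrite <- sumR_sumSupp_swap; apply sumR_ext; intros w _.
  unfold topic_mix; simpl; rewrite Rmult_1_r, sumSupp_mul.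
  set (M := sumSupp k x (fun j => sumSupp k x (fun l => A w j * z j * (A w l * z l)))).
  replace (indic (ahat_nz k A x w) * M / ahat_dot k A x w)
    with (indic (ahat_nz k A x w) / ahat_dot k A x w * M) by (unfold Rdiv; ring).
  unfold M; rewrite <- sumSupp_scal; apply sumSupp_ext; intros j _.
  rewrite <- sumSupp_scal; apply sumSupp_ext; intros; ring.
Qed.

Lemma quadform_fisher_ge0 z : 0 <= quadform_supp k x Q z.
Proof.
  rewrite quadform_fisher; apply sumR_ge0; intros w Hw.
  rewrite <- word_prob_eq_ahat_dot; pose proof (word_prob_ge0 D k A x A_word_topic x_simplex w Hw).
  pose proof (indic_bounds (ahat_nz k A x w)); pose proof (pow2_ge_0 (topic_mix z w)).
  unfold Rdiv; apply Rmult_le_pos; [nra | now apply Rinv_ge0].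
Qed.

Lemma sum_abs_topic_mix_le z a :
  0 < a -> sumR D (fun w => Rabs (topic_mix z w)) <= a / 2 + quadform_supp k x Q z / (2 * a).
Proof.
  intros Ha; rewrite quadform_fisher.
  transitivity (sumR D (fun w => a / 2 * word_prob k A x w
                  + / (2 * a) * (indic (ahat_nz k A x w) * topic_mix z w ^ 2 / ahat_dot k A x w))).
  - apply sumR_le; intros w Hw; rewrite word_prob_eq_ahat_dot.
    pose proof (word_prob_ge0 D k A x A_word_topic x_simplex w Hw) as Hd.
    rewrite word_prob_eq_ahat_dot in Hd.
    destruct (Req_dec (ahat_dot k A x w) 0) as [E|E].
    + replace (topic_mix z w) with 0.
      * rewrite E, Rabs_R0; unfold Rdiv; rewrite Rinv_0; lra.
      * unfold topic_mix; rewrite <- (sumSupp_0 k x); apply sumSupp_ext; intros j Hj.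
        rewrite (ahat_dot_eq0_coef D k A x A_word_topic x_simplex w j) by auto; ring.
    + assert (Hpos : 0 < ahat_dot k A x w) by (destruct Hd as [|Hd]; [auto | now symmetry in Hd]).
      destruct (classic (ahat_nz k A x w)) as [Hnz|Hz].
      * rewrite indic_true by auto; pose proof (abs_le_amgm (topic_mix z w) _ a Hpos Ha).
        unfold Rdiv in *; lra.
      * replace (topic_mix z w) with 0.
        -- rewrite indic_false, Rabs_R0 by auto.
           replace (0 * 0 ^ 2 / ahat_dot k A x w) with 0 by (unfold Rdiv; ring).
           rewrite Rmult_0_r, Rplus_0_r; apply Rmult_le_pos; lra.
        -- unfold topic_mix; rewrite <- (sumSupp_0 k x); apply sumSupp_ext; intros j Hj.
           destruct (Req_dec (A w j) 0) as [->|Ej]; [ring | exfalso; apply Hz; now exists j].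
  - rewrite sumR_add, !sumR_scal, word_prob_sum1 by auto; unfold Rdiv; lra.
Qed.

(* (A2) for [z] restricted to the support, then the AM-GM bound above at [a = |z|_1 / kappa]. *)
Lemma l1_sq_le_quadform_fisher z :
  sumSupp k x (fun j => Rabs (z j)) ^ 2 <= kappa ^ 2 * quadform_supp k x Q z.
Proof.
  set (N := sumSupp k x (fun j => Rabs (z j))); set (V := quadform_supp k x Q z).
  assert (HV : 0 <= V) by apply quadform_fisher_ge0.
  assert (HN : 0 <= N) by (apply sumSupp_ge0; intros; apply Rabs_pos).
  destruct (Req_dec N 0) as [->|N0]; [simpl; nra |].
  set (v := fun i => indic (supp k x i) * z i).
  assert (Hv : sparse k r v).
  { eapply Rle_trans; [| apply card_supp_le]; apply sumR_le; intros i _; apply indic_le.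
    intros Hvi; apply NNPP; intros Hs; apply Hvi; unfold v; rewrite indic_false by auto; ring. }
  assert (Hlow : N / kappa <= sumR D (fun w => Rabs (topic_mix z w))).
  { apply Rge_le; replace N with (sumR k (fun i => Rabs (v i))).
    - replace (sumR D (fun w => Rabs (topic_mix z w)))
        with (sumR D (fun w => Rabs (sumR k (fun i => A w i * v i)))); [now apply A_identifiable |].
      apply sumR_ext; intros w _; f_equal; apply sumR_ext; intros; unfold v; ring.
    - apply sumR_ext; intros i _; unfold v; rewrite Rabs_mult, Rabs_pos_eq by apply indic_bounds.
      reflexivity. }
  assert (HNpos : 0 < N) by (destruct HN; [auto | congruence]).
  assert (Hamgm : N / kappa <= N / (2 * kappa) + kappa * V / (2 * N)).
  { replace (N / (2 * kappa) + kappa * V / (2 * N)) with (N / kappa / 2 + V / (2 * (N / kappa)))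
      by (field; lra).
    eapply Rle_trans; [exact Hlow | apply sum_abs_topic_mix_le, Rdiv_lt_0_compat; lra]. }
  apply (Rmult_le_compat_r (2 * N * kappa)) in Hamgm; [| nra].
  replace (N / kappa * (2 * N * kappa)) with (2 * N ^ 2) in Hamgm by (field; lra).
  replace ((N / (2 * kappa) + kappa * V / (2 * N)) * (2 * N * kappa)) with (N ^ 2 + kappa ^ 2 * V)
    in Hamgm by (field; lra).
  lra.
Qed.

Section InverseSquareRootOfFisher.

Variable S : nat -> nat -> R.
Hypothesis S_inv_sqrt : is_inv_sqrt k x Q S.

(* Row [i] of [Q^{-1} = S S] has quadratic form [Q^{-1}_ii] and l1 norm at least [|Q^{-1}_ii|]. *)
Lemma SS_diag_le i : supp k x i -> mulmx_supp k x S S i i <= kappa ^ 2.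
Proof.
  intros Hi; set (m := mulmx_supp k x S S i i).
  pose proof (l1_sq_le_quadform_fisher (fun j => mulmx_supp k x S S i j)) as H; cbv beta in H.
  rewrite (quadform_SS_row k x Q S S_inv_sqrt i Hi) in H; fold m in H.
  assert (Hm : Rabs m <= sumSupp k x (fun j => Rabs (mulmx_supp k x S S i j))).
  { apply (sumSupp_ge_term k x (fun j => Rabs (mulmx_supp k x S S i j))); auto; intros; apply Rabs_pos. }
  pose proof (Rabs_pos m); pose proof (Rle_abs m).
  assert (Rabs m ^ 2 <= kappa ^ 2 * Rabs m).
  { eapply Rle_trans; [apply pow_incr; split; [apply Rabs_pos | exact Hm] |].
    eapply Rle_trans; [exact H |].
    apply Rmult_le_compat_l; [apply pow2_ge_0 | apply Rle_abs]. }
  destruct (Rle_dec m (kappa ^ 2)); nra.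
Qed.

Lemma inv_sqrt_entry_le i j : supp k x i -> supp k x j -> Rabs (S i j) <= kappa.
Proof.
  intros Hi Hj.
  assert (Rabs (S i j) ^ 2 <= kappa ^ 2).
  { rewrite pow2_abs; eapply Rle_trans; [apply (inv_sqrt_sq_le k x Q S) | apply SS_diag_le]; auto. }
  pose proof (Rabs_pos (S i j)); nra.
Qed.

End InverseSquareRootOfFisher.

End Identifiability.

Lemma card_supp_ge1 k x : in_simplex k x -> 1 <= sumR k (fun i => indic (supp k x i)).
Proof.
  intros Hx.
  assert (Hi : exists i, supp k x i).
  { apply NNPP; intros Hno; pose proof (proj2 Hx) as H1.
    rewrite (sumR_ext _ _ (fun _ => 0)), sumR_0 in H1; [lra |].
    intros i Hi; apply NNPP; intros Hxi; apply Hno; now exists i. }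
  destruct Hi as [i Hi]; rewrite <- (indic_true _ Hi).
  apply (sumR_ge_term k (fun j => indic (supp k x j))); [intros; apply indic_bounds | apply Hi].
Qed.

Lemma one_le_ln a : 3 <= a -> 1 <= ln a.
Proof.
  intros Ha; rewrite <- (ln_exp 1); pose proof exp_le_3.
  destruct (Rle_lt_or_eq_dec (exp 1) a) as [Hlt|Heq]; [lra | | right; now rewrite Heq].
  left; apply ln_increasing; [apply exp_pos | exact Hlt].
Qed.

Section Concentration.

Variables (D k : nat) (A : nat -> nat -> R) (x : nat -> R) (r : nat) (tau kappa : R).
Variable S : nat -> nat -> R.

Hypothesis A_word_topic : word_topic D k A.
Hypothesis x_simplex : in_simplex k x.
Hypothesis x_sparse : assumpA1 k r tau x.
Hypothesis kappa_pos : 0 < kappa.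
Hypothesis A_identifiable : assumpA2 D k r kappa A.
Hypothesis S_inv_sqrt : is_inv_sqrt k x (fisher D k A x) S.

Lemma r_ge1 : 1 <= INR r.
Proof. destruct x_sparse as [_ [Hr _]]; pose proof (card_supp_ge1 k x x_simplex); lra. Qed.

Lemma increment_abs_le w i : supp k x i -> (w < D)%nat -> ahat_dot k A x w <> 0 ->
  Rabs (whitened_increment k A x S w i) <= 2 * kappa * INR r / tau.
Proof.
  intros Hi Hw Hd0; destruct x_sparse as [Htau [Hr Hxlow]]; pose proof r_ge1 as Hr1.
  set (d := ahat_dot k A x w) in *.
  assert (Hd : 0 < d).
  { pose proof (word_prob_ge0 D k A x A_word_topic x_simplex w Hw) as Hp.
    rewrite word_prob_eq_ahat_dot in Hp; fold d in Hp; destruct Hp as [|Heq]; [auto | congruence]. }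
  assert (HA : forall j, supp k x j -> 0 <= A w j) by (intros j Hj; apply A_word_topic; auto; apply Hj).
  assert (Hmass : sumSupp k x (fun j => A w j / d) <= INR r / tau).
  { assert (sumSupp k x (A w) * (tau / INR r) <= d).
    { rewrite <- sumSupp_scalr; apply sumSupp_le; intros j Hj.
      apply Rmult_le_compat_l, Rge_le, Hxlow; auto. }
    unfold Rdiv at 1; rewrite sumSupp_scalr.
    apply (Rmult_le_reg_r (d * (tau / INR r))); [apply Rmult_lt_0_compat; [lra | apply Rdiv_lt_0_compat; lra] |].
    replace (INR r / tau * (d * (tau / INR r))) with d by (field; lra).
    replace (sumSupp k x (A w) * / d * (d * (tau / INR r)))
      with (sumSupp k x (A w) * (tau / INR r)) by (field; lra); lra. }
  assert (Hcard : sumSupp k x (fun _ => 1) <= INR r / tau).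
  { rewrite sumSupp_const, Rmult_1_r; apply (Rle_trans _ (INR r)); [lra |].
    unfold Rdiv; rewrite <- (Rmult_1_r (INR r)) at 1; apply Rmult_le_compat_l; [lra |].
    rewrite <- Rinv_1; apply Rinv_le_contravar; lra. }
  unfold whitened_increment; eapply Rle_trans; [apply sumSupp_abs |].
  transitivity (kappa * sumSupp k x (fun j => A w j / d + 1)).
  - rewrite <- sumSupp_scal; apply sumSupp_le; intros j Hj; rewrite Rabs_mult.
    apply Rmult_le_compat; try apply Rabs_pos.
    + now apply (inv_sqrt_entry_le D k A x r kappa A_word_topic x_simplex Hr kappa_pos A_identifiable S S_inv_sqrt).
    + unfold centred_ratio; fold d; apply Rabs_le.
      assert (0 <= A w j / d) by (apply Rmult_le_pos; [auto | apply Rinv_ge0; lra]); lra.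
  - rewrite sumSupp_add; replace (2 * kappa * INR r / tau) with (kappa * (INR r / tau + INR r / tau)) by (field; lra).
    apply Rmult_le_compat_l; lra.
Qed.

Lemma whitened_coord_tail n s i :
  (2 * kappa * INR r / tau) ^ 2 <= INR n -> supp k x i ->
  prob (word_prob k A x) D n (fun ws => Rabs (whitened k A x S n ws i) > 2 * s * sqrt (INR n)) <= 4 * exp (- s).
Proof.
  intros Hn Hi; pose proof r_ge1; destruct x_sparse as [Htau _].
  assert (HM : 0 < 2 * kappa * INR r / tau) by (apply Rdiv_lt_0_compat; nra).
  assert (Hn0 : (0 < n)%nat) by (apply INR_lt; simpl; nra).
  unfold prob; rewrite (expect_ext _ _ _ _
    (fun ws => indic (Rabs (foldsum (fun w => whitened_increment k A x S w i) ws) > 2 * s * sqrt (INR n))))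
    by (intros ws Hws; now rewrite whitened_foldsum).
  apply prob_abs_foldsum_gt_le; auto.
  - apply word_prob_ge0; auto.
  - apply word_prob_sum1; auto.
  - apply increment_mean0; auto.
  - apply increment_second_moment_le1; auto.
  - intros w Hw Hp; rewrite word_prob_eq_ahat_dot in Hp.
    eapply Rle_trans; [now apply increment_abs_le |].
    rewrite <- (sqrt_pow2 (2 * kappa * INR r / tau)) by lra; now apply sqrt_le_1_alt.
Qed.

Lemma whitened_tail n :
  3 <= INR k -> 4 * kappa ^ 2 * INR r ^ 2 * ln (INR k) / tau ^ 2 <= INR n ->
  prob (word_prob k A x) D n
    (fun ws => exists i, supp k x i /\ Rabs (whitened k A x S n ws i) > 6 * ln (INR k) * sqrt (INR n))
  <= 4 / INR k ^ 2.
Proof.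
  intros Hk Hn; pose proof (one_le_ln _ Hk) as HL; destruct x_sparse as [Htau _].
  assert (Hn' : (2 * kappa * INR r / tau) ^ 2 <= INR n).
  { replace (4 * kappa ^ 2 * INR r ^ 2 * ln (INR k) / tau ^ 2)
      with ((2 * kappa * INR r / tau) ^ 2 * ln (INR k)) in Hn by (field; lra).
    pose proof (pow2_ge_0 (2 * kappa * INR r / tau)); nra. }
  eapply Rle_trans; [apply (prob_exists_supp_le _ D); intros; now apply (word_prob_ge0 D) |].
  transitivity (sumSupp k x (fun _ => 4 * exp (- (3 * ln (INR k))))).
  - apply sumSupp_le; intros i Hi.
    replace (6 * ln (INR k)) with (2 * (3 * ln (INR k))) by ring.
    now apply whitened_coord_tail.
  - assert (Hk3 : exp (- (3 * ln (INR k))) = / INR k ^ 3).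
    { replace (3 * ln (INR k)) with (INR 3 * ln (INR k)) by (simpl; ring).
      rewrite exp_Ropp, <- exp_pow, exp_ln by lra; reflexivity. }
    rewrite Hk3, sumSupp_const.
    assert (0 <= 4 * / INR k ^ 3) by (apply Rmult_le_pos; [lra | apply Rinv_ge0; nra]).
    eapply Rle_trans; [apply Rmult_le_compat_r; [auto | apply card_supp_le] | right; field; lra].
Qed.

End Concentration.

Theorem lemma5p2 :
  exists c : R, 0 < c /\
  exists (C : R) (p : nat), 0 < C /\
  forall eps : R, 0 < eps ->
  exists K : nat,
  forall (D k : nat) (A : nat -> nat -> R) (x : nat -> R) (r : nat)
         (tau kappa : R) (n : nat) (S : nat -> nat -> R),
    word_topic D k A ->
    in_simplex k x ->
    assumpA1 k r tau x ->
    0 < kappa ->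
    assumpA2 D k r kappa A ->
    is_inv_sqrt k x (fisher D k A x) S ->
    INR n >= c * kappa ^ 2 * INR r ^ 2 * ln (INR k) / tau ^ 2 ->
    (K <= k)%nat ->
    prob (word_prob k A x) D n
      (fun ws =>
         norm2_supp k x (whitened k A x S n ws)
           > C * ln (INR k) ^ p * sqrt (INR n * INR r)
         \/
         exists i, supp k x i /\
           Rabs (whitened k A x S n ws i) > C * ln (INR k) ^ p * sqrt (INR n))
    <= eps.
Proof.
  exists 4; split; [lra |]; exists 6, 1%nat; split; [lra |].
  intros eps Heps; destruct (archimed_cor1 (eps / 4)) as [N [HN HN0]]; [lra |].
  exists (Nat.max 3 N); intros D k A x r tau kappa n S HA Hx H1 Hkappa H2 HS Hn HK.
  assert (Hk3 : 3 <= INR k) by (replace 3 with (INR 3) by (simpl; ring); apply le_INR; lia).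
  assert (HkN : INR N <= INR k) by (apply le_INR; lia).
  pose proof (one_le_ln _ Hk3) as HL; pose proof (proj1 (proj2 H1)) as Hr.
  set (t := 6 * ln (INR k) * sqrt (INR n)).
  assert (Ht : 0 <= t) by (unfold t; pose proof (sqrt_pos (INR n)); nra).
  eapply Rle_trans.
  { apply (prob_mono _ _ (word_prob_ge0 D k A x HA Hx) n _
      (fun ws => exists i, supp k x i /\ Rabs (whitened k A x S n ws i) > t)).
    intros ws [Hnorm | Hcoord]; rewrite pow_1 in *; [| exact Hcoord].
    apply (norm2_supp_gt_exists k x _ t r Ht Hr).
    rewrite sqrt_mult in Hnorm by apply pos_INR; unfold t; lra. }
  eapply Rle_trans; [apply (whitened_tail D k A x r tau kappa S); auto; lra |].
  assert (HN0' : 0 < INR N) by (apply lt_0_INR; lia).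
  assert (4 / INR k ^ 2 <= 4 / INR N).
  { unfold Rdiv; apply Rmult_le_compat_l; [lra |]; apply Rinv_le_contravar; [lra | simpl; nra]. }
  unfold Rdiv in *; lra.
Qed.
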